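(* Let $M\ge1$, let $\Delta_M=\{\mathbf d\in[0,1]^M:\sum_i d_i=1\}$, and for each $j\ge0$ let $C_{vj}:\Delta_M\to[0,1]$ be Lipschitz continuous functions with $C_{vj}(\mathbf d)\ge C_{v(j+1)}(\mathbf d)$ for all $j,\mathbf d$. For $\epsilon_v>0$ let $J_{\epsilon_v}(\mathbf d)$ be the smallest integer $j$ with $C_{vj}(\mathbf d)>C_{v(j+1)}(\mathbf d)+\epsilon_v$. For $p\in[0,1]$, $\mathbf d\in\Delta_M$ and integer $n\ge0$ let $q_v(p\mathbf d,n)=\sum_{j=0}^{n}\binom{n}{j}p^j(1-p)^{n-j}C_{vj}(\mathbf d)$, extended to real $\hat K\ge0$ by $q_v(p\mathbf d,\hat K)=(\lfloor\hat K\rfloor+1-\hat K)q_v(p\mathbf d,\lfloor\hat K\rfloor)+(\hat K-\lfloor\hat K\rfloor)q_v(p\mathbf d,\lfloor\hat K\rfloor+1)$. Let $\hat K_0<\hat K_1<\dots<\hat K_L$ be integers, and suppose values $p(\hat K_i)\in(0,1)$ and $\mathbf d(\hat K_i)\in\Delta_M$ are given; set $\mathbf p(\hat K_i)=p(\hat K_i)\mathbf d(\hat K_i)$ and $q_v^*(\hat K_i)=q_v(\mathbf p(\hat K_i),\hat K_i)$. For $i=1,\dots,L$ and $0\le\lambda<1$ define $\hat K_{i\lambda}=(1-\lambda)\hat K_{i-1}+\lambda\hat K_i$, $\mathbf d_{i\lambda}=(1-\lambda)\mathbf d(\hat K_{i-1})+\lambda\mathbf d(\hat K_i)$, $q^*_{vi\lambda}=(1-\lambda)q_v^*(\hat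 K_{i-1})+\lambda q_v^*(\hat K_i)$. Assume (Pinpoints Condition): (1) there is $\epsilon_q>0$ with $q_v^*(\hat K_{i-1})-q_v^*(\hat K_i)\ge\epsilon_q$ for $i=1,\dots,L$; (2) there is $\epsilon_v>0$ with $\hat K_{i\lambda}>J_{\epsilon_v}(\mathbf d_{i\lambda})$ for all $i=1,\dots,L$ and $0\le\lambda<1$; (3) there are $0<\underline p<\overline p<1$ with $\underline p\le p(\hat K_i)\le\overline p$ for $i=1,\dots,L$; (4) $q_v(\overline p\,\mathbf d_{i\lambda},\hat K_{i\lambda})\le q^*_{vi\lambda}\le q_v(\underline p\,\mathbf d_{i\lambda},\hat K_{i\lambda})$ for all $i=1,\dots,L$ and $0\le\lambda<1$. Complete the function by the Interpolation Approach: for $\hat K=\hat K_{i\lambda}$ ($i=1,\dots,L$, $0\le\lambda<1$), choose $p(\hat K)\in[\underline p,\overline p]$ with $q_v(p(\hat K)\mathbf d_{i\lambda},\hat K_{i\lambda})=q^*_{vi\lambda}$, and set $\mathbf d(\hat K)=\mathbf d_{i\lambda}$, $\mathbf p(\hat K)=p(\hat K)\mathbf d_{i\lambda}$, and $q_v^*(\hat K)=(\lfloor\hat K\rfloor+1-\hat K)q_v(\mathbf p(\hat K),\lfloor\hat K\rfloor)+(\hat K-\lfloor\hat K\rfloor)q_v(\mathbf p(\hat K),\lfloor\hat K\rfloor+1)$. Then on $[\hat K_0,\hat K_L]$ the following (Monotonicity and Gradient Condition) hold: (a) $\mathbf p(\hat K)$ is Lipschitz continuous: there is $K_g>0$ with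 $\|\mathbf p(\hat K_a)-\mathbf p(\hat K_b)\|\le K_g|\hat K_a-\hat K_b|$ for all $\hat K_a,\hat K_b\in[\hat K_0,\hat K_L]$; (b) $q_v^*(\hat K)$ is continuous and strictly decreasing, and there is $\epsilon'>0$ with $|q_v^*(\hat K_a)-q_v^*(\hat K_b)|\ge\epsilon'|\hat K_a-\hat K_b|$ for all $\hat K_a,\hat K_b\in[\hat K_0,\hat K_L]$; (c) $\hat K>J_{\epsilon_v}(\mathbf d(\hat K))$ for all $\hat K\in[\hat K_0,\hat K_L)$; (d) $\underline p\le p(\hat K)\le\overline p$ for all $\hat K\in[\hat K_0,\hat K_L]$.
   Context: Setting: each of several homogeneous users has $M$ transmission options plus idling; a user's transmission probability vector is $\mathbf p=p\mathbf d$, where $p$ is the probability of transmitting and $\mathbf d\in\Delta_M$ gives the conditional probabilities of the options. $C_{vj}(\mathbf d)$ is the success probability of a virtual packet transmitted in parallel with $j$ real packets when all users use direction $\mathbf d$, and $q_v(p\mathbf d,n)$ is the virtual packet success probability when $n$ users each use $p\mathbf d$. The Lipschitz continuity of each $C_{vj}(\cdot)$ in $\mathbf d$ is a standing regularity assumption used implicitly. $\hat K$ plays the role of a user-number estimate and $q_v^*$ is the ''theoretical channel contention measure''; the integers $\hat K_i$ are called pinpoints. *)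

From Stdlib Require Import Reals Lra Lia List.
Open Scope R_scope.

Definition sumR (n : nat) (f : nat -> R) : R :=
  fold_right Rplus 0 (map f (seq 0 n)).

(* Vectors of R^M are represented by functions nat -> R, of which only the
   coordinates m < M are meaningful. *)
Definition in_simplex (M : nat) (d : nat -> R) : Prop :=
  (forall m, (m < M)%nat -> 0 <= d m <= 1) /\ sumR M d = 1.

Definition distM (M : nat) (x y : nat -> R) : R :=
  sqrt (sumR M (fun m => (x m - y m) ^ 2)).

Definition vscale (a : R) (d : nat -> R) : nat -> R := fun m => a * d m.
Definition vcomb (lam : R) (x y : nat -> R) : nat -> R :=
  fun m => (1 - lam) * x m + lam * y m.

(* Floor of a real number, as a natural number (used for K >= 0). *)
Definition nfloor (x : R) : nat := Z.to_nat (Int_part x).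

Definition qv (Cv : nat -> (nat -> R) -> R) (p : R) (d : nat -> R) (n : nat) : R :=
  sum_f_R0 (fun j => C n j * p ^ j * (1 - p) ^ (n - j) * Cv j d) n.

Definition qvR (Cv : nat -> (nat -> R) -> R) (p : R) (d : nat -> R) (K : R) : R :=
  let n := nfloor K in
  (INR n + 1 - K) * qv Cv p d n + (K - INR n) * qv Cv p d (S n).

Definition isJ (Cv : nat -> (nat -> R) -> R) (eps : R) (d : nat -> R) (j : nat) : Prop :=
  Cv j d > Cv (S j) d + eps /\
  (forall k, (k < j)%nat -> ~ (Cv k d > Cv (S k) d + eps)).

Definition gtJ (Cv : nat -> (nat -> R) -> R) (eps : R) (d : nat -> R) (K : R) : Prop :=
  exists j, isJ Cv eps d j /\ INR j < K.

Definition Kil (Kp : nat -> nat) (i : nat) (lam : R) : R :=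
  (1 - lam) * INR (Kp (i - 1)%nat) + lam * INR (Kp i).

From Stdlib Require Import Reals List Lra Lia ZArith ClassicalEpsilon.
Open Scope R_scope.

(* On each segment between consecutive pinpoints d(K) and q*(K) are affine interpolations,
   so q* is piecewise linear with slopes between -1 and -eps_q/(K_L - K_0), which gives (b);
   (c) and (d) are read off the pinpoint conditions.  The value p(K) exists by the
   intermediate value theorem, q_v being a polynomial in p bracketed by condition (4).
   Lipschitz continuity of p(K) is an implicit-function argument: q_v(p d(K), K) decreases in
   p at a rate bounded below uniformly in K, since its Bernstein sums pick up a gap
   C_vJ - C_v(J+1) >= eps_v / 2 at some J < K with weight min(1, K - J) bounded away from 0. *)

Lemma Rabs_le_between a b : Rabs a <= b -> -b <= a <= b.
Proof. intros; split_Rabs; lra. Qed.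

Lemma Rle_pow_le1 x m n : 0 <= x <= 1 -> (m <= n)%nat -> x ^ n <= x ^ m.
Proof.
  intros Hx Hmn. replace n with (m + (n - m))%nat by lia. rewrite pow_add.
  pose proof (pow_le x m (proj1 Hx)). pose proof (pow_le x (n - m) (proj1 Hx)).
  assert (x ^ (n - m) <= 1) by (rewrite <- (pow1 (n - m)); apply pow_incr; lra).
  nra.
Qed.

Lemma continuity_ext f g : (forall x, f x = g x) -> continuity f -> continuity g.
Proof.
  intros E Hf x. apply (continuity_pt_locally_ext f g 1 x); [lra | intros; apply E | apply Hf].
Qed.

Definition Bern (n : nat) (f : nat -> R) (p : R) : R :=
  sum_f_R0 (fun j => C n j * p ^ j * (1 - p) ^ (n - j) * f j) n.

Lemma C_n_0 n : C n 0 = 1.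
Proof. unfold C. rewrite Nat.sub_0_r. simpl. field. apply INR_fact_neq_0. Qed.

Lemma C_n_n n : C n n = 1.
Proof. unfold C. rewrite Nat.sub_diag. simpl. field. apply INR_fact_neq_0. Qed.

Lemma Bern_0 f p : Bern 0 f p = f 0%nat.
Proof. unfold Bern. simpl. rewrite C_n_0. ring. Qed.

Lemma Bern_S n f p :
  Bern (S n) f p = (1 - p) * Bern n f p + p * Bern n (fun j => f (S j)) p.
Proof.
  destruct n as [|n].
  - unfold Bern. simpl. rewrite !C_n_0, !C_n_n. ring.
  - unfold Bern.
    rewrite (decomp_sum _ (S (S n))) by lia. simpl Init.Nat.pred.
    rewrite tech5.
    rewrite (decomp_sum (fun j => C (S n) j * p ^ j * (1 - p) ^ (S n - j) * f j) (S n))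
      by lia.
    simpl Init.Nat.pred.
    rewrite (tech5 (fun j => C (S n) j * p ^ j * (1 - p) ^ (S n - j) * f (S j))).
    rewrite !Rmult_plus_distr_l, !scal_sum.
    assert (Hpascal :
      sum_f_R0 (fun i => C (S (S n)) (S i) * p ^ S i * (1 - p) ^ (S (S n) - S i) * f (S i)) n
      = sum_f_R0 (fun i => C (S n) (S i) * p ^ S i * (1 - p) ^ (S n - S i) * f (S i) * (1 - p)) n
      + sum_f_R0 (fun i => C (S n) i * p ^ i * (1 - p) ^ (S n - i) * f (S i) * p) n).
    { rewrite <- plus_sum. apply sum_eq. intros i Hi.
      rewrite <- pascal by lia.
      replace (S (S n) - S i)%nat with (S (S n - S i)) by lia.
      replace (S n - i)%nat with (S (S n - S i)) by lia.
      simpl. ring. }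
    rewrite Hpascal, !C_n_0, !C_n_n, !Nat.sub_diag. simpl. ring.
Qed.

Lemma Bern_continuous n : forall f, continuity (Bern n f).
Proof.
  induction n as [|n IHn]; intro f.
  - apply (continuity_ext (fun _ => f 0%nat)); [intro; symmetry; apply Bern_0 | reg].
  - apply (continuity_ext (fun p => (1 - p) * Bern n f p + p * Bern n (fun j => f (S j)) p)).
    + intro; symmetry; apply Bern_S.
    + pose proof (IHn f). pose proof (IHn (fun j => f (S j))). reg.
Qed.

Lemma Bern_sub n : forall f g p, Bern n (fun j => f j - g j) p = Bern n f p - Bern n g p.
Proof.
  induction n as [|n IHn]; intros f g p.
  - rewrite !Bern_0. ring.
  - rewrite !Bern_S, IHn, (IHn (fun j => f (S j)) (fun j => g (S j))). ring.
Qed.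

Lemma Bern_nonneg n : forall f p, (forall j, 0 <= f j) -> 0 <= p <= 1 -> 0 <= Bern n f p.
Proof.
  induction n as [|n IHn]; intros f p Hf Hp.
  - rewrite Bern_0. apply Hf.
  - rewrite Bern_S.
    pose proof (IHn f p Hf Hp). pose proof (IHn (fun j => f (S j)) p (fun j => Hf (S j)) Hp).
    nra.
Qed.

Lemma Bern_bounds n : forall f p a b, (forall j, a <= f j <= b) -> 0 <= p <= 1 ->
  a <= Bern n f p <= b.
Proof.
  induction n as [|n IHn]; intros f p a b Hf Hp.
  - rewrite Bern_0. apply Hf.
  - rewrite Bern_S.
    pose proof (IHn f p a b Hf Hp).
    pose proof (IHn (fun j => f (S j)) p a b (fun j => Hf (S j)) Hp).
    nra.
Qed.

Lemma Bern_dist n : forall f g p c, (forall j, (j <= n)%nat -> Rabs (f j - g j) <= c) ->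
  0 <= p <= 1 -> Rabs (Bern n f p - Bern n g p) <= c.
Proof.
  induction n as [|n IHn]; intros f g p c H Hp.
  - rewrite !Bern_0. apply H. lia.
  - rewrite !Bern_S.
    assert (H1 := IHn f g p c (fun j Hj => H j ltac:(lia)) Hp).
    assert (H2 := IHn (fun j => f (S j)) (fun j => g (S j)) p c
                      (fun j Hj => H (S j) ltac:(lia)) Hp).
    apply Rabs_le_between in H1, H2. apply Rabs_le. nra.
Qed.

Lemma Bern_antitone n : forall f p p', (forall j, f (S j) <= f j) ->
  0 <= p -> p <= p' -> p' <= 1 -> Bern n f p' <= Bern n f p.
Proof.
  induction n as [|n IHn]; intros f p p' Hf H1 H2 H3.
  - rewrite !Bern_0. lra.
  - rewrite !Bern_S.
    pose proof (IHn f p p' Hf H1 H2 H3).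
    pose proof (IHn (fun j => f (S j)) p p' (fun j => Hf (S j)) H1 H2 H3).
    assert (Hd := Bern_nonneg n (fun j => f j - f (S j)) p'
                    ltac:(intro j; pose proof (Hf j); lra) ltac:(lra)).
    rewrite Bern_sub in Hd.
    nra.
Qed.

Lemma Bern_ge_term n : forall g p m J, (forall j, 0 <= g j) -> 0 <= m -> m <= p -> m <= 1 - p ->
  (J <= n)%nat -> m ^ n * g J <= Bern n g p.
Proof.
  induction n as [|n IHn]; intros g p m J Hg Hm0 Hm1 Hm2 HJ.
  - rewrite Bern_0. replace J with 0%nat by lia. simpl. lra.
  - rewrite Bern_S. simpl pow.
    pose proof (Bern_nonneg n g p Hg ltac:(lra)).
    pose proof (Bern_nonneg n (fun j => g (S j)) p (fun j => Hg (S j)) ltac:(lra)).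
    pose proof (pow_le m n Hm0).
    destruct J as [|J].
    + pose proof (IHn g p m 0%nat Hg Hm0 Hm1 Hm2 ltac:(lia)). pose proof (Hg 0%nat). nra.
    + pose proof (IHn (fun j => g (S j)) p m J (fun j => Hg (S j)) Hm0 Hm1 Hm2 ltac:(lia)).
      pose proof (Hg (S J)). nra.
Qed.

Lemma Bern_S_sub_ge n f p p' m J : (forall j, f (S j) <= f j) ->
  0 <= p -> p <= p' -> p' <= 1 -> 0 <= m -> m <= p' -> m <= 1 - p' -> (J <= n)%nat ->
  (p' - p) * (m ^ n * (f J - f (S J))) <= Bern (S n) f p - Bern (S n) f p'.
Proof.
  intros Hf H1 H2 H3 Hm0 Hm1 Hm2 HJ.
  rewrite !Bern_S.
  pose proof (Bern_antitone n f p p' Hf H1 H2 H3).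
  pose proof (Bern_antitone n (fun j => f (S j)) p p' (fun j => Hf (S j)) H1 H2 H3).
  assert (Hg := Bern_ge_term n (fun j => f j - f (S j)) p' m J
                  ltac:(intro j; pose proof (Hf j); lra) Hm0 Hm1 Hm2 HJ).
  rewrite Bern_sub in Hg.
  nra.
Qed.

Lemma nfloor_eq n K : INR n <= K < INR n + 1 -> nfloor K = n.
Proof.
  intros [H1 H2]. unfold nfloor, Int_part.
  assert (E : up K = (Z.of_nat n + 1)%Z).
  { symmetry. apply tech_up; rewrite plus_IZR, <- INR_IZR_INZ; simpl; lra. }
  rewrite E. replace (Z.of_nat n + 1 - 1)%Z with (Z.of_nat n) by lia. apply Nat2Z.id.
Qed.

Lemma nfloor_spec K : 0 <= K -> INR (nfloor K) <= K < INR (nfloor K) + 1.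
Proof.
  intros HK. destruct (base_Int_part K) as [H1 H2].
  assert (Hz : (0 <= Int_part K)%Z).
  { assert (Hgt : IZR (Int_part K) > -1) by lra. apply lt_IZR in Hgt. lia. }
  unfold nfloor. rewrite INR_IZR_INZ, Z2Nat.id by exact Hz. lra.
Qed.

Lemma nfloor_INR n : nfloor (INR n) = n.
Proof. apply nfloor_eq. lra. Qed.

Lemma sumR_S n f : sumR (S n) f = sumR n f + f n.
Proof.
  unfold sumR. rewrite seq_S, map_app, fold_right_app. simpl.
  induction (map f (seq 0 n)); simpl; lra.
Qed.

Lemma sumR_lin n a b f g :
  sumR n (fun m => a * f m + b * g m) = a * sumR n f + b * sumR n g.
Proof.
  induction n as [|n IHn].
  - unfold sumR. simpl. ring.
  - rewrite !sumR_S, IHn. ring.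
Qed.

Lemma sumR_le n f c : (forall m, (m < n)%nat -> f m <= c) -> sumR n f <= INR n * c.
Proof.
  induction n as [|n IHn]; intros H.
  - unfold sumR. simpl. lra.
  - rewrite sumR_S, S_INR.
    pose proof (IHn (fun m Hm => H m ltac:(lia))). pose proof (H n ltac:(lia)). lra.
Qed.

Lemma distM_nonneg M x y : 0 <= distM M x y.
Proof. apply sqrt_pos. Qed.

Lemma distM_bound M x y c : 0 <= c -> (forall m, (m < M)%nat -> Rabs (x m - y m) <= c) ->
  distM M x y <= sqrt (INR M) * c.
Proof.
  intros Hc H. unfold distM.
  rewrite <- (sqrt_pow2 c Hc), <- sqrt_mult_alt by apply pos_INR.
  apply sqrt_le_1_alt, sumR_le. intros m Hm. specialize (H m Hm).
  pose proof (Rabs_pos (x m - y m)).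
  rewrite <- (pow2_abs (x m - y m)). nra.
Qed.

Lemma vcomb_simplex M lam x y : in_simplex M x -> in_simplex M y -> 0 <= lam <= 1 ->
  in_simplex M (vcomb lam x y).
Proof.
  intros [Hx Sx] [Hy Sy] Hl. split.
  - intros m Hm. specialize (Hx m Hm). specialize (Hy m Hm). unfold vcomb. nra.
  - unfold vcomb. rewrite sumR_lin, Sx, Sy. ring.
Qed.

Lemma Lipschitz_uniform_upto M (Cv : nat -> (nat -> R) -> R) :
  (forall j, exists Lc, forall d1 d2, in_simplex M d1 -> in_simplex M d2 ->
       Rabs (Cv j d1 - Cv j d2) <= Lc * distM M d1 d2) ->
  forall n, exists Lm, 0 <= Lm /\ forall j, (j <= n)%nat -> forall d1 d2,
       in_simplex M d1 -> in_simplex M d2 -> Rabs (Cv j d1 - Cv j d2) <= Lm * distM M d1 d2.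
Proof.
  intros H n. induction n as [|n [Lm [HLm IH]]].
  - destruct (H 0%nat) as [Lc HL]. exists (Rabs Lc). split; [apply Rabs_pos|].
    intros j Hj d1 d2 H1 H2. replace j with 0%nat by lia.
    eapply Rle_trans; [apply HL; auto|].
    apply Rmult_le_compat_r; [apply distM_nonneg | apply Rle_abs].
  - destruct (H (S n)) as [Lc HL].
    exists (Rmax Lm (Rabs Lc)). split; [eapply Rle_trans; [exact HLm | apply Rmax_l]|].
    intros j Hj d1 d2 H1 H2. pose proof (distM_nonneg M d1 d2).
    destruct (Nat.eq_dec j (S n)) as [->|Hne].
    + eapply Rle_trans; [apply HL; auto|]. apply Rmult_le_compat_r; auto.
      eapply Rle_trans; [apply Rle_abs | apply Rmax_r].
    + eapply Rle_trans; [apply IH; auto; lia|]. apply Rmult_le_compat_r; auto. apply Rmax_l.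
Qed.

Lemma chain_increment_bounds (x : nat -> R) (f : R -> R) (lo hi : R) (L : nat) :
  (forall i, (i < L)%nat -> forall a b, x i <= a -> a <= b -> b <= x (S i) ->
     lo * (b - a) <= f b - f a <= hi * (b - a)) ->
  forall a b, x 0%nat <= a -> a <= b -> b <= x L ->
     lo * (b - a) <= f b - f a <= hi * (b - a).
Proof.
  induction L as [|L IHL]; intros H a b H1 H2 H3.
  - replace b with a by lra. lra.
  - specialize (IHL (fun i Hi => H i ltac:(lia))).
    destruct (Rle_dec b (x L)); [apply IHL; auto|].
    destruct (Rle_dec (x L) a); [apply (H L); [lia | lra ..]|].
    pose proof (IHL a (x L) H1 ltac:(lra) ltac:(lra)).
    pose proof (H L ltac:(lia) (x L) b ltac:(lra) ltac:(lra) H3).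
    lra.
Qed.

Lemma chain_Lipschitz x f c L :
  (forall i, (i < L)%nat -> forall a b, x i <= a -> a <= b -> b <= x (S i) ->
     Rabs (f b - f a) <= c * (b - a)) ->
  forall a b, x 0%nat <= a <= x L -> x 0%nat <= b <= x L ->
     Rabs (f a - f b) <= c * Rabs (a - b).
Proof.
  intros H.
  assert (K : forall a b, x 0%nat <= a -> a <= b -> b <= x L ->
                (- c) * (b - a) <= f b - f a <= c * (b - a)).
  { apply chain_increment_bounds. intros i Hi a b H1 H2 H3.
    pose proof (Rabs_le_between _ _ (H i Hi a b H1 H2 H3)). lra. }
  intros a b Ha Hb. destruct (Rle_dec a b).
  - specialize (K a b ltac:(lra) r ltac:(lra)).
    rewrite Rabs_minus_sym, (Rabs_minus_sym a b), (Rabs_right (b - a)) by lra.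
    apply Rabs_le. lra.
  - specialize (K b a ltac:(lra) ltac:(lra) ltac:(lra)).
    rewrite (Rabs_right (a - b)) by lra. apply Rabs_le. lra.
Qed.

Lemma qvR_Bern Cv p d K : qvR Cv p d K =
  (INR (nfloor K) + 1 - K) * Bern (nfloor K) (fun j => Cv j d) p
  + (K - INR (nfloor K)) * Bern (S (nfloor K)) (fun j => Cv j d) p.
Proof. reflexivity. Qed.

Lemma qvR_on_unit_interval Cv p d n K : INR n <= K <= INR n + 1 ->
  qvR Cv p d K = (INR n + 1 - K) * Bern n (fun j => Cv j d) p
                 + (K - INR n) * Bern (S n) (fun j => Cv j d) p.
Proof.
  intros H. destruct (Rlt_dec K (INR n + 1)).
  - rewrite qvR_Bern, (nfloor_eq n K) by lra. reflexivity.
  - replace K with (INR (S n)) by (rewrite S_INR; lra).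
    rewrite qvR_Bern, nfloor_INR, S_INR. ring.
Qed.

Lemma qvR_bounds Cv p d K : 0 <= K -> 0 <= p <= 1 -> (forall j, 0 <= Cv j d <= 1) ->
  0 <= qvR Cv p d K <= 1.
Proof.
  intros HK Hp HF. rewrite qvR_Bern. pose proof (nfloor_spec K HK).
  pose proof (Bern_bounds (nfloor K) (fun j => Cv j d) p 0 1 HF Hp).
  pose proof (Bern_bounds (S (nfloor K)) (fun j => Cv j d) p 0 1 HF Hp).
  nra.
Qed.

Lemma qvR_continuous_p Cv d K : continuity (fun p => qvR Cv p d K).
Proof.
  pose proof (Bern_continuous (nfloor K) (fun j => Cv j d)).
  pose proof (Bern_continuous (S (nfloor K)) (fun j => Cv j d)).
  apply (continuity_ext (fun p =>
    (INR (nfloor K) + 1 - K) * Bern (nfloor K) (fun j => Cv j d) p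
    + (K - INR (nfloor K)) * Bern (S (nfloor K)) (fun j => Cv j d) p)); [reflexivity | reg].
Qed.

Lemma qvR_dist Cv p d d' K c : 0 <= K -> 0 <= p <= 1 ->
  (forall j, (j <= S (nfloor K))%nat -> Rabs (Cv j d - Cv j d') <= c) ->
  Rabs (qvR Cv p d K - qvR Cv p d' K) <= c.
Proof.
  intros HK Hp H. rewrite !qvR_Bern. pose proof (nfloor_spec K HK).
  set (n := nfloor K) in *.
  pose proof (Bern_dist n (fun j => Cv j d) (fun j => Cv j d') p c
                (fun j Hj => H j ltac:(lia)) Hp) as A1.
  pose proof (Bern_dist (S n) (fun j => Cv j d) (fun j => Cv j d') p c H Hp) as A2.
  apply Rabs_le_between in A1, A2. apply Rabs_le. nra.
Qed.

Lemma qvR_Lipschitz_K Cv p d a b : 0 <= p <= 1 -> (forall j, 0 <= Cv j d <= 1) ->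
  0 <= a -> 0 <= b -> Rabs (qvR Cv p d a - qvR Cv p d b) <= Rabs (a - b).
Proof.
  intros Hp HF Ha Hb.
  set (N := S (nfloor a + nfloor b)).
  assert (HN : a <= INR N /\ b <= INR N).
  { pose proof (nfloor_spec a Ha). pose proof (nfloor_spec b Hb).
    unfold N. rewrite S_INR, plus_INR. pose proof (pos_INR (nfloor a)).
    pose proof (pos_INR (nfloor b)). lra. }
  rewrite <- (Rmult_1_l (Rabs (a - b))).
  apply (chain_Lipschitz INR (fun K => qvR Cv p d K) 1 N);
    [| split; [simpl; lra | tauto] ..].
  intros i Hi x y H1 H2 H3. rewrite S_INR in H3.
  rewrite !(qvR_on_unit_interval Cv p d i) by lra.
  pose proof (Bern_bounds i (fun j => Cv j d) p 0 1 HF Hp).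
  pose proof (Bern_bounds (S i) (fun j => Cv j d) p 0 1 HF Hp).
  set (A := Bern i (fun j => Cv j d) p) in *. set (B := Bern (S i) (fun j => Cv j d) p) in *.
  replace ((INR i + 1 - y) * A + (y - INR i) * B - ((INR i + 1 - x) * A + (x - INR i) * B))
    with ((y - x) * (B - A)) by ring.
  apply Rabs_le. split; nra.
Qed.

(* The top Bernstein sum contributes the gap at J with weight K - floor K, and when
   J < floor K the lower one contributes it with weight 1. *)
Lemma qvR_sub_ge Cv d p p' m K J : 0 <= K -> (forall j, Cv (S j) d <= Cv j d) ->
  0 <= p -> p <= p' -> p' <= 1 -> 0 <= m -> m <= p' -> m <= 1 - p' -> INR J < K ->
  Rmin 1 (K - INR J) * ((p' - p) * (m ^ nfloor K * (Cv J d - Cv (S J) d)))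
    <= qvR Cv p d K - qvR Cv p' d K.
Proof.
  intros HK HM H1 H2 H3 Hm0 Hm1 Hm2 HJK.
  rewrite !qvR_Bern. pose proof (nfloor_spec K HK) as Hn.
  set (n := nfloor K) in *. set (f := fun j => Cv j d).
  assert (HJn : (J <= n)%nat).
  { apply Nat.lt_succ_r, INR_lt. rewrite S_INR. lra. }
  set (T := (p' - p) * (m ^ n * (f J - f (S J)))).
  assert (HT : 0 <= T).
  { pose proof (pow_le m n Hm0). pose proof (HM J).
    apply Rmult_le_pos; [lra|]. apply Rmult_le_pos; unfold f; lra. }
  pose proof (Bern_antitone n f p p' HM H1 H2 H3) as X.
  pose proof (Bern_S_sub_ge n f p p' m J HM H1 H2 H3 Hm0 Hm1 Hm2 HJn) as Y.
  fold T in Y. change ((p' - p) * (m ^ n * (Cv J d - Cv (S J) d))) with T.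
  assert (Hw0 : 0 <= (INR n + 1 - K) * (Bern n f p - Bern n f p')) by (apply Rmult_le_pos; lra).
  destruct (Nat.eq_dec J n) as [->|HJne].
  - assert (Rmin 1 (K - INR n) * T <= (K - INR n) * T)
      by (apply Rmult_le_compat_r; [exact HT | apply Rmin_r]).
    assert ((K - INR n) * T <= (K - INR n) * (Bern (S n) f p - Bern (S n) f p'))
      by (apply Rmult_le_compat_l; lra).
    lra.
  - destruct n as [|k]; [lia|].
    pose proof (Bern_S_sub_ge k f p p' m J HM H1 H2 H3 Hm0 Hm1 Hm2 ltac:(lia)) as Y'.
    assert (T <= (p' - p) * (m ^ k * (f J - f (S J)))).
    { pose proof (Rle_pow_le1 m k (S k) ltac:(lra) ltac:(lia)). pose proof (HM J).
      unfold T, f. apply Rmult_le_compat_l; [lra|]. apply Rmult_le_compat_r; lra. }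
    assert (Rmin 1 (K - INR J) * T <= T)
      by (rewrite <- (Rmult_1_l T) at 2; apply Rmult_le_compat_r; [exact HT | apply Rmin_l]).
    assert ((INR (S k) + 1 - K) * T <= (INR (S k) + 1 - K) * (Bern (S k) f p - Bern (S k) f p'))
      by (apply Rmult_le_compat_l; lra).
    assert ((K - INR (S k)) * T <= (K - INR (S k)) * (Bern (S (S k)) f p - Bern (S (S k)) f p'))
      by (apply Rmult_le_compat_l; lra).
    lra.
Qed.

Lemma interval_of_partition (x : nat -> R) K : forall L, x 0%nat <= K < x L ->
  exists i, (1 <= i <= L)%nat /\ x (i - 1)%nat <= K < x i.
Proof.
  induction L as [|L IHL]; intros [H1 H2]; [lra|].
  destruct (Rlt_dec K (x L)) as [HK|HK].
  - destruct (IHL (conj H1 HK)) as [i [Hi HKi]]. exists i. split; [lia | exact HKi].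
  - exists (S L). split; [lia|]. replace (S L - 1)%nat with L by lia. lra.
Qed.

Lemma ratio_bounds g G u : 1 <= g <= G -> 0 <= u -> 0 <= u / G <= u / g /\ u / g <= u.
Proof.
  intros Hg Hu. split; [split|].
  - apply Rmult_le_pos; [exact Hu|]. apply Rlt_le, Rinv_0_lt_compat. lra.
  - apply Rmult_le_compat_l; [exact Hu|]. apply Rinv_le_contravar; lra.
  - apply (Rmult_le_reg_r g); [lra|]. unfold Rdiv.
    rewrite Rmult_assoc, Rinv_l by lra. nra.
Qed.

Section Interpolation.

Variables (M : nat) (Cv : nat -> (nat -> R) -> R) (L : nat) (Kp : nat -> nat)
  (p0 : nat -> R) (d0 : nat -> nat -> R) (eps_q eps_v p_lo p_hi : R).

(* [HM] and the positivity hypotheses come after hypotheses that determine their parameter,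
   so that [eapply _; eassumption] in the final proof cannot instantiate it wrongly. *)
Hypothesis HC01 : forall j d, in_simplex M d -> 0 <= Cv j d <= 1.
Hypothesis HClip : forall j, exists Lc, forall d1 d2, in_simplex M d1 -> in_simplex M d2 ->
  Rabs (Cv j d1 - Cv j d2) <= Lc * distM M d1 d2.
Hypothesis HCdecr : forall j d, in_simplex M d -> Cv j d >= Cv (S j) d.
Hypothesis HL : (1 <= L)%nat.
Hypothesis HKp : forall i, (i < L)%nat -> (Kp i < Kp (S i))%nat.
Hypothesis Hp0 : forall i, (i <= L)%nat -> 0 < p0 i < 1.
Hypothesis Hd0 : forall i, (i <= L)%nat -> in_simplex M (d0 i).
Hypothesis HM : (1 <= M)%nat.

Definition knot i := INR (Kp i).
Definition qs i := qvR Cv (p0 i) (d0 i) (knot i).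
Definition dil i lam := vcomb lam (d0 (i - 1)%nat) (d0 i).
Definition qil i lam := (1 - lam) * qs (i - 1)%nat + lam * qs i.
Definition seg_coord i K := (K - knot (i - 1)%nat) / (knot i - knot (i - 1)%nat).

Hypothesis Hqs_gap : forall i, (1 <= i <= L)%nat -> qs (i - 1)%nat - qs i >= eps_q.
Hypothesis Heps_q : 0 < eps_q.
Hypothesis HJ : forall i lam, (1 <= i <= L)%nat -> 0 <= lam < 1 ->
  gtJ Cv eps_v (dil i lam) (Kil Kp i lam).
Hypothesis Heps_v : 0 < eps_v.
Hypothesis Hp0b : forall i, (1 <= i <= L)%nat -> p_lo <= p0 i <= p_hi.
Hypothesis Hplo : 0 < p_lo.
Hypothesis Hlohi : p_lo < p_hi.
Hypothesis Hphi : p_hi < 1.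
Hypothesis Hbracket : forall i lam, (1 <= i <= L)%nat -> 0 <= lam < 1 ->
  qvR Cv p_hi (dil i lam) (Kil Kp i lam) <= qil i lam /\
  qil i lam <= qvR Cv p_lo (dil i lam) (Kil Kp i lam).

Lemma Cv_unit d j : in_simplex M d -> 0 <= Cv j d <= 1.
Proof. intro; apply HC01; assumption. Qed.

Lemma Cv_antitone d j : in_simplex M d -> Cv (S j) d <= Cv j d.
Proof. intro Hd. pose proof (HCdecr j d Hd). lra. Qed.

Lemma Kp_lt i j : (i < j <= L)%nat -> (Kp i < Kp j)%nat.
Proof.
  induction j as [|j IHj]; intros Hij; [lia|].
  pose proof (HKp j ltac:(lia)).
  destruct (Nat.eq_dec i j) as [->|Hne]; [lia|].
  pose proof (IHj ltac:(lia)). lia.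
Qed.

Lemma knot_le i j : (i <= j <= L)%nat -> knot i <= knot j.
Proof.
  intros Hij. unfold knot. apply le_INR.
  destruct (Nat.eq_dec i j) as [->|Hne]; [lia|]. pose proof (Kp_lt i j ltac:(lia)). lia.
Qed.

Lemma knot_gap i : (1 <= i <= L)%nat -> knot (i - 1)%nat + 1 <= knot i.
Proof.
  intros Hi. unfold knot. rewrite <- S_INR. apply le_INR.
  apply (Kp_lt (i - 1) i). lia.
Qed.

Lemma Kil_range i lam : (1 <= i <= L)%nat -> 0 <= lam < 1 ->
  knot (i - 1)%nat <= Kil Kp i lam < knot i.
Proof. intros Hi Hl. pose proof (knot_gap i Hi). unfold Kil. fold (knot i) (knot (i - 1)%nat). nra. Qed.

Lemma Kil_inj i lam i' lam' : (1 <= i <= L)%nat -> 0 <= lam < 1 ->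
  (1 <= i' <= L)%nat -> 0 <= lam' < 1 -> Kil Kp i lam = Kil Kp i' lam' -> i = i' /\ lam = lam'.
Proof.
  intros Hi Hl Hi' Hl' E.
  pose proof (Kil_range i lam Hi Hl). pose proof (Kil_range i' lam' Hi' Hl').
  destruct (lt_eq_lt_dec i i') as [[Hlt| <-]|Hlt].
  - pose proof (knot_le i (i' - 1) ltac:(lia)). lra.
  - split; [reflexivity|]. unfold Kil in E. pose proof (knot_gap i Hi).
    fold (knot i) (knot (i - 1)%nat) in E.
    apply Rmult_eq_reg_r with (knot i - knot (i - 1)%nat); [nra | lra].
  - pose proof (knot_le i' (i - 1) ltac:(lia)). lra.
Qed.

Lemma seg_coord_spec i K : (1 <= i <= L)%nat -> knot (i - 1)%nat <= K <= knot i ->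
  Kil Kp i (seg_coord i K) = K /\ 0 <= seg_coord i K <= 1 /\
  (K < knot i -> seg_coord i K < 1).
Proof.
  intros Hi HK. pose proof (knot_gap i Hi).
  unfold seg_coord. split; [|split].
  - unfold Kil. fold (knot i) (knot (i - 1)%nat). field. lra.
  - split; [|apply (Rmult_le_reg_r (knot i - knot (i - 1)%nat)); [lra|];
             unfold Rdiv; rewrite Rmult_assoc, Rinv_l; lra].
    unfold Rdiv. apply Rmult_le_pos; [lra|]. apply Rlt_le, Rinv_0_lt_compat. lra.
  - intros Hlt. apply (Rmult_lt_reg_r (knot i - knot (i - 1)%nat)); [lra|].
    unfold Rdiv. rewrite Rmult_assoc, Rinv_l; lra.
Qed.

Lemma dil_simplex i lam : (1 <= i <= L)%nat -> 0 <= lam <= 1 -> in_simplex M (dil i lam).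
Proof. intros Hi Hl. apply vcomb_simplex; [apply Hd0; lia | apply Hd0; lia | exact Hl]. Qed.

Lemma qs_unit i : (i <= L)%nat -> 0 <= qs i <= 1.
Proof.
  intros Hi. apply qvR_bounds; [apply pos_INR | pose proof (Hp0 i Hi); lra |].
  intro j. apply Cv_unit, Hd0, Hi.
Qed.

Lemma interp_p_exists i lam : (1 <= i <= L)%nat -> 0 <= lam < 1 ->
  exists p, p_lo <= p <= p_hi /\ qvR Cv p (dil i lam) (Kil Kp i lam) = qil i lam.
Proof.
  intros Hi Hl. destruct (Hbracket i lam Hi Hl) as [Hhi Hlo].
  set (g := fun p => qvR Cv p (dil i lam) (Kil Kp i lam) - qil i lam).
  assert (Hg : continuity g).
  { exact (continuity_minus _ (fct_cte (qil i lam)) (qvR_continuous_p _ _ _)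
             (continuity_const (fct_cte (qil i lam)) (fun _ _ => eq_refl))). }
  destruct (IVT_cor g p_lo p_hi Hg ltac:(lra)) as [p [Hp Hgp]].
  - unfold g. nra.
  - exists p. unfold g in Hgp. split; [exact Hp | lra].
Qed.

Definition interp_spec (pf : R -> R) (df : R -> nat -> R) : Prop :=
  (forall i lam, (1 <= i <= L)%nat -> 0 <= lam < 1 ->
     p_lo <= pf (Kil Kp i lam) <= p_hi /\
     qvR Cv (pf (Kil Kp i lam)) (dil i lam) (Kil Kp i lam) = qil i lam /\
     df (Kil Kp i lam) = dil i lam) /\
  pf (knot L) = p0 L /\ df (knot L) = d0 L.

Lemma interp_spec_exists : exists pf df, interp_spec pf df.
Proof.
  assert (Hpoint : forall K, exists pd : R * (nat -> R),
    (forall i lam, (1 <= i <= L)%nat -> 0 <= lam < 1 -> K = Kil Kp i lam ->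
       p_lo <= fst pd <= p_hi /\ qvR Cv (fst pd) (dil i lam) (Kil Kp i lam) = qil i lam /\
       snd pd = dil i lam) /\
    (K = knot L -> fst pd = p0 L /\ snd pd = d0 L)).
  { intros K.
    destruct (classic (exists i lam, (1 <= i <= L)%nat /\ 0 <= lam < 1 /\ K = Kil Kp i lam))
      as [[i [lam [Hi [Hl ->]]]] | Hnone].
    - destruct (interp_p_exists i lam Hi Hl) as [p [Hp Hq]]. exists (p, dil i lam). split.
      + intros i' lam' Hi' Hl' E.
        destruct (Kil_inj i lam i' lam' Hi Hl Hi' Hl' E) as [<- <-]. auto.
      + intros E. pose proof (Kil_range i lam Hi Hl). pose proof (knot_le i L ltac:(lia)). lra.
    - exists (p0 L, d0 L). split; [|auto].
      intros i lam Hi Hl E. exfalso. apply Hnone. exists i, lam. auto. }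
  destruct (choice _ Hpoint) as [pd Hpd].
  exists (fun K => fst (pd K)), (fun K => snd (pd K)). split; [|split].
  - intros i lam Hi Hl. apply (proj1 (Hpd (Kil Kp i lam))); auto.
  - apply (proj2 (Hpd (knot L))). reflexivity.
  - apply (proj2 (Hpd (knot L))). reflexivity.
Qed.

Lemma qil_sub i a b : (1 <= i <= L)%nat ->
  qil i (seg_coord i b) - qil i (seg_coord i a)
  = (b - a) / (knot i - knot (i - 1)%nat) * (qs i - qs (i - 1)%nat).
Proof. intros Hi. pose proof (knot_gap i Hi). unfold qil, seg_coord. field. lra. Qed.

Lemma dil_sub i a b m : (1 <= i <= L)%nat ->
  dil i (seg_coord i b) m - dil i (seg_coord i a) m
  = (b - a) / (knot i - knot (i - 1)%nat) * (d0 i m - d0 (i - 1)%nat m).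
Proof. intros Hi. pose proof (knot_gap i Hi). unfold dil, vcomb, seg_coord. field. lra. Qed.

Lemma segment_of_closed K : knot 0 <= K <= knot L ->
  exists i, (1 <= i <= L)%nat /\ knot (i - 1)%nat <= K <= knot i.
Proof.
  intros HK. destruct (Rlt_dec K (knot L)) as [Hlt|Hge].
  - destruct (interval_of_partition knot K L ltac:(lra)) as [i [Hi HKi]].
    exists i. split; [exact Hi | lra].
  - exists L. split; [lia|]. pose proof (knot_le (L - 1) L ltac:(lia)). lra.
Qed.

Section Completed.

Variables (pf : R -> R) (df : R -> nat -> R).
Hypothesis Hspec : interp_spec pf df.

Definition qstar K := qvR Cv (pf K) (df K) K.

(* At a pinpoint the specification gives d(K) as dil (S i) 0, which agrees with dil i 1
   only pointwise. *)
Lemma completed_on_segment i K : (1 <= i <= L)%nat -> knot (i - 1)%nat <= K <= knot i ->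
  p_lo <= pf K <= p_hi /\ in_simplex M (df K) /\
  (forall m, df K m = dil i (seg_coord i K) m) /\ qstar K = qil i (seg_coord i K).
Proof.
  intros Hi HK. destruct Hspec as [Hs [HpL HdL]].
  destruct (seg_coord_spec i K Hi HK) as [E [Hl Hl1]].
  destruct (Rlt_dec K (knot i)) as [Hlt|Hge].
  - destruct (Hs i (seg_coord i K) Hi (conj (proj1 Hl) (Hl1 Hlt))) as [B1 [B2 B3]].
    rewrite E in B1, B2, B3. unfold qstar. rewrite B3.
    split; [exact B1 | split; [apply dil_simplex; auto | split; [reflexivity | exact B2]]].
  - assert (HKi : K = knot i) by lra. subst K.
    assert (Hl' : seg_coord i (knot i) = 1).
    { unfold seg_coord. pose proof (knot_gap i Hi). field. lra. }
    rewrite Hl'. unfold qstar.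
    destruct (Nat.eq_dec i L) as [->|HiL].
    + rewrite HpL, HdL. split; [apply Hp0b; lia|]. split; [apply Hd0; lia|].
      unfold dil, vcomb, qil, qs. split; [intro m; ring | ring].
    + assert (E2 : Kil Kp (S i) 0 = knot i).
      { unfold Kil. replace (S i - 1)%nat with i by lia. fold (knot i). ring. }
      destruct (Hs (S i) 0 ltac:(lia) ltac:(lra)) as [B1 [B2 B3]].
      rewrite E2 in B1, B2, B3. rewrite B3, B2.
      split; [exact B1 | split; [apply dil_simplex; [lia | lra] |]].
      unfold dil, vcomb, qil. replace (S i - 1)%nat with i by lia.
      split; [intro m; ring | ring].
Qed.

Lemma pf_bounds K : knot 0 <= K <= knot L -> p_lo <= pf K <= p_hi.
Proof.
  intros HK. destruct (segment_of_closed K HK) as [i [Hi HKi]].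
  apply (completed_on_segment i K Hi HKi).
Qed.

Lemma df_simplex K : knot 0 <= K <= knot L -> in_simplex M (df K).
Proof.
  intros HK. destruct (segment_of_closed K HK) as [i [Hi HKi]].
  apply (completed_on_segment i K Hi HKi).
Qed.

Lemma df_gtJ K : knot 0 <= K < knot L -> gtJ Cv eps_v (df K) K.
Proof.
  intros HK. destruct (interval_of_partition knot K L HK) as [i [Hi HKi]].
  destruct (seg_coord_spec i K Hi ltac:(lra)) as [E [Hl Hl1]].
  assert (Hlam : 0 <= seg_coord i K < 1) by (split; [lra | apply Hl1; lra]).
  destruct (proj1 Hspec i (seg_coord i K) Hi Hlam) as [_ [_ Hd]].
  pose proof (HJ i (seg_coord i K) Hi Hlam) as HJi.
  rewrite E in Hd, HJi. rewrite Hd. exact HJi.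
Qed.

(* q* interpolates linearly between consecutive pinpoints, which are at least one unit
   apart and whose q*-values drop by at least eps_q and at most 1. *)
Lemma qstar_increment_bounds a b : knot 0 <= a -> a <= b -> b <= knot L ->
  -1 * (b - a) <= qstar b - qstar a <= - (eps_q / (knot L - knot 0)) * (b - a).
Proof.
  apply (chain_increment_bounds knot qstar). intros i Hi x y H1 H2 H3.
  assert (HSi : (1 <= S i <= L)%nat) by lia.
  assert (Hpred : (S i - 1)%nat = i) by lia.
  destruct (completed_on_segment (S i) x HSi) as [_ [_ [_ Qa]]]; [rewrite Hpred; lra|].
  destruct (completed_on_segment (S i) y HSi) as [_ [_ [_ Qb]]]; [rewrite Hpred; lra|].
  rewrite Qa, Qb, qil_sub, Hpred by exact HSi.
  pose proof (knot_gap (S i) HSi). pose proof (knot_le 0 i ltac:(lia)).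
  pose proof (knot_le (S i) L ltac:(lia)).
  rewrite Hpred in *.
  pose proof (ratio_bounds (knot (S i) - knot i) (knot L - knot 0) (y - x)
                ltac:(lra) ltac:(lra)).
  pose proof (Hqs_gap (S i) HSi). rewrite Hpred in *.
  pose proof (qs_unit i ltac:(lia)). pose proof (qs_unit (S i) ltac:(lia)).
  replace (- (eps_q / (knot L - knot 0)) * (y - x))
    with (- eps_q * ((y - x) / (knot L - knot 0))) by (field; lra).
  set (u := (y - x) / (knot (S i) - knot i)) in *.
  split; nra.
Qed.

Lemma qstar_Lipschitz a b : knot 0 <= a <= knot L -> knot 0 <= b <= knot L ->
  Rabs (qstar a - qstar b) <= Rabs (a - b).
Proof.
  intros Ha Hb. pose proof (knot_le 0 L ltac:(lia)).
  assert (HG : 0 < eps_q / (knot L - knot 0)).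
  { pose proof (knot_gap 1 ltac:(lia)). pose proof (knot_le 1 L ltac:(lia)).
    apply Rdiv_lt_0_compat; simpl in *; lra. }
  destruct (Rle_dec a b).
  - pose proof (qstar_increment_bounds a b ltac:(lra) r ltac:(lra)).
    rewrite (Rabs_left1 (a - b)) by lra. apply Rabs_le. nra.
  - pose proof (qstar_increment_bounds b a ltac:(lra) ltac:(lra) ltac:(lra)).
    rewrite (Rabs_right (a - b)) by lra. apply Rabs_le. nra.
Qed.

Lemma df_coord_Lipschitz m a b : (m < M)%nat ->
  knot 0 <= a <= knot L -> knot 0 <= b <= knot L -> Rabs (df a m - df b m) <= Rabs (a - b).
Proof.
  intros Hm Ha Hb. rewrite <- (Rmult_1_l (Rabs (a - b))).
  apply (chain_Lipschitz knot (fun K => df K m) 1 L); auto.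
  intros i Hi a' b' H1 H2 H3.
  assert (HSi : (1 <= S i <= L)%nat) by lia.
  assert (Hpred : (S i - 1)%nat = i) by lia.
  destruct (completed_on_segment (S i) a' HSi) as [_ [_ [Da _]]]; [rewrite Hpred; lra|].
  destruct (completed_on_segment (S i) b' HSi) as [_ [_ [Db _]]]; [rewrite Hpred; lra|].
  rewrite Da, Db, dil_sub, Hpred by exact HSi.
  pose proof (knot_gap (S i) HSi). rewrite Hpred in *.
  pose proof (ratio_bounds (knot (S i) - knot i) (knot (S i) - knot i) (b' - a')
                ltac:(lra) ltac:(lra)).
  destruct (Hd0 i ltac:(lia)) as [Hi1 _]. destruct (Hd0 (S i) ltac:(lia)) as [Hi2 _].
  specialize (Hi1 m Hm). specialize (Hi2 m Hm).
  set (u := (b' - a') / (knot (S i) - knot i)) in *.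
  apply Rabs_le. split; nra.
Qed.

Lemma df_Lipschitz a b : knot 0 <= a <= knot L -> knot 0 <= b <= knot L ->
  distM M (df a) (df b) <= sqrt (INR M) * Rabs (a - b).
Proof.
  intros Ha Hb. apply distM_bound; [apply Rabs_pos|].
  intros m Hm. apply df_coord_Lipschitz; assumption.
Qed.

Lemma qstar_continuous K : knot 0 <= K <= knot L ->
  limit1_in qstar (fun y => knot 0 <= y <= knot L) (qstar K) K.
Proof.
  intros HK eps Heps. exists eps. split; [exact Heps|].
  intros y [Hy Hdy]. simpl in *. unfold Rdist in *.
  eapply Rle_lt_trans; [apply qstar_Lipschitz | exact Hdy]; assumption.
Qed.

Lemma qstar_decreasing a b : knot 0 <= a <= knot L -> knot 0 <= b <= knot L -> a < b ->
  qstar b < qstar a.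
Proof.
  intros Ha Hb Hab. pose proof (qstar_increment_bounds a b ltac:(lra) ltac:(lra) ltac:(lra)).
  pose proof (knot_gap 1 ltac:(lia)). pose proof (knot_le 1 L ltac:(lia)). simpl in *.
  assert (0 < eps_q / (knot L - knot 0)) by (apply Rdiv_lt_0_compat; lra).
  nra.
Qed.

Lemma qstar_expansive : exists eps', 0 < eps' /\ forall a b,
  knot 0 <= a <= knot L -> knot 0 <= b <= knot L ->
  Rabs (qstar a - qstar b) >= eps' * Rabs (a - b).
Proof.
  pose proof (knot_gap 1 ltac:(lia)). pose proof (knot_le 1 L ltac:(lia)). simpl in *.
  set (e := eps_q / (knot L - knot 0)).
  assert (He : 0 < e) by (apply Rdiv_lt_0_compat; lra).
  exists e. split; [exact He|].
  intros a b Ha Hb. destruct (Rle_dec a b).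
  - pose proof (qstar_increment_bounds a b ltac:(lra) r ltac:(lra)) as Hinc. fold e in Hinc.
    assert (0 <= e * (b - a)) by (apply Rmult_le_pos; lra).
    rewrite (Rabs_left1 (a - b)), Rabs_right by lra. lra.
  - pose proof (qstar_increment_bounds b a ltac:(lra) ltac:(lra) ltac:(lra)) as Hinc. fold e in Hinc.
    assert (0 <= e * (a - b)) by (apply Rmult_le_pos; lra).
    rewrite (Rabs_right (a - b)), Rabs_left1 by lra. lra.
Qed.

(* Near an integer J the gap of C_v at J may be carried only by the top Bernstein sum
   with a vanishing weight; there the condition J < K, applied at K = J itself, yields a
   smaller index whose gap survives the perturbation of d(K) by continuity. *)
Lemma uniform_gap : exists del, 0 < del /\ forall K, knot 0 <= K < knot L ->
  exists J, INR J < K /\ del <= Rmin 1 (K - INR J) /\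
            eps_v / 2 <= Cv J (df K) - Cv (S J) (df K).
Proof.
  destruct (Lipschitz_uniform_upto M Cv HClip (Kp L)) as [Lm [HLm HLmb]].
  set (sM := sqrt (INR M)). pose proof (sqrt_pos (INR M)) as HsM. fold sM in HsM.
  assert (HLs : 0 <= Lm * sM) by (apply Rmult_le_pos; assumption).
  set (del := Rmin (1 / 2) (eps_v / (4 * (Lm * sM) + 1))).
  assert (Hdel : 0 < del <= 1 / 2 /\ 4 * (Lm * sM) * del <= eps_v).
  { assert (E : eps_v / (4 * (Lm * sM) + 1) * (4 * (Lm * sM) + 1) = eps_v) by (field; lra).
    assert (0 < eps_v / (4 * (Lm * sM) + 1)) by (apply Rdiv_lt_0_compat; lra).
    unfold del, Rmin. destruct Rle_dec; nra. }
  exists del. split; [lra|]. intros K HK.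
  destruct (df_gtJ K HK) as [J [[HgapJ _] HJK]].
  destruct (Rle_dec del (K - INR J)) as [Hfar|Hnear].
  - exists J. split; [exact HJK|]. split; [apply Rmin_glb; lra | lra].
  - assert (HJrange : knot 0 <= INR J < knot L).
    { split; [|lra]. unfold knot. apply le_INR, Nat.lt_succ_r, INR_lt.
      rewrite S_INR. fold (knot 0). lra. }
    destruct (df_gtJ (INR J) HJrange) as [J' [[HgapJ' _] HJ'J]].
    apply INR_lt in HJ'J.
    assert (HJ'1 : INR J' + 1 <= INR J) by (rewrite <- S_INR; apply le_INR; lia).
    assert (HJL : (J < Kp L)%nat) by (apply INR_lt; fold (knot L); lra).
    exists J'. split; [lra|]. split; [apply Rmin_glb; lra|].
    assert (Hdist : Lm * distM M (df K) (df (INR J)) <= Lm * sM * del).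
    { rewrite Rmult_assoc. apply Rmult_le_compat_l; [exact HLm|].
      eapply Rle_trans; [apply df_Lipschitz; lra|]. fold sM.
      apply Rmult_le_compat_l; [exact HsM|]. rewrite Rabs_right; lra. }
    assert (HsK := df_simplex K ltac:(lra)). assert (HsJ := df_simplex (INR J) ltac:(lra)).
    pose proof (Rabs_le_between _ _ (HLmb J' ltac:(lia) _ _ HsK HsJ)).
    pose proof (Rabs_le_between _ _ (HLmb (S J') ltac:(lia) _ _ HsK HsJ)).
    lra.
Qed.

Lemma qvR_p_modulus : exists mu, 0 < mu /\ forall K, knot 0 <= K < knot L ->
  forall p p', p_lo <= p -> p <= p' -> p' <= p_hi ->
  mu * (p' - p) <= qvR Cv p (df K) K - qvR Cv p' (df K) K.
Proof.
  destruct uniform_gap as [del [Hdel Hgap]].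
  set (m0 := Rmin p_lo (1 - p_hi)).
  assert (Hm0 : 0 < m0 /\ m0 <= p_lo /\ m0 <= 1 - p_hi).
  { unfold m0, Rmin. destruct Rle_dec; lra. }
  set (c0 := m0 ^ Kp L).
  assert (Hc0 : 0 < c0) by (apply pow_lt; lra).
  exists (del * (c0 * (eps_v / 2))).
  split; [apply Rmult_lt_0_compat; [lra | apply Rmult_lt_0_compat; lra]|].
  intros K HK p p' H1 H2 H3.
  destruct (Hgap K HK) as [J [HJK [HdelJ HgapJ]]].
  assert (HK0 : 0 <= K) by (pose proof (pos_INR (Kp 0)); unfold knot in HK; lra).
  pose proof (qvR_sub_ge Cv (df K) p p' m0 K J HK0
                (fun j => Cv_antitone _ j (df_simplex K ltac:(lra)))
                ltac:(lra) H2 ltac:(lra) ltac:(lra) ltac:(lra) ltac:(lra) HJK) as Hsub.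
  assert (Hn : c0 <= m0 ^ nfloor K).
  { apply Rle_pow_le1; [lra|]. apply INR_le. pose proof (nfloor_spec K HK0).
    fold (knot L). lra. }
  assert (c0 * (eps_v / 2) <= m0 ^ nfloor K * (Cv J (df K) - Cv (S J) (df K)))
    by (apply Rmult_le_compat; lra).
  assert (del * ((p' - p) * (c0 * (eps_v / 2)))
          <= Rmin 1 (K - INR J) * ((p' - p) * (m0 ^ nfloor K * (Cv J (df K) - Cv (S J) (df K))))).
  { apply Rmult_le_compat; [lra | | exact HdelJ | apply Rmult_le_compat_l; lra].
    apply Rmult_le_pos; [lra | apply Rmult_le_pos; lra]. }
  lra.
Qed.

Lemma qvR_df_Lipschitz : exists Lq, 0 <= Lq /\ forall p a b, 0 <= p <= 1 ->
  knot 0 <= a <= knot L -> knot 0 <= b <= knot L ->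
  Rabs (qvR Cv p (df b) a - qvR Cv p (df a) a) <= Lq * Rabs (a - b).
Proof.
  destruct (Lipschitz_uniform_upto M Cv HClip (S (Kp L))) as [Lm [HLm HLmb]].
  exists (Lm * sqrt (INR M)). split; [apply Rmult_le_pos; [exact HLm | apply sqrt_pos]|].
  intros p a b Hp Ha Hb.
  assert (Ha0 : 0 <= a) by (pose proof (pos_INR (Kp 0)); unfold knot in Ha; lra).
  eapply Rle_trans.
  - apply (qvR_dist Cv p (df b) (df a) a (Lm * distM M (df b) (df a)) Ha0 Hp).
    intros j Hj. apply HLmb; [| apply df_simplex; lra ..].
    pose proof (nfloor_spec a Ha0). assert (INR (nfloor a) <= INR (Kp L)) by (fold (knot L); lra).
    apply INR_le in H0. lia.
  - rewrite Rmult_assoc. apply Rmult_le_compat_l; [exact HLm|].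
    rewrite Rabs_minus_sym. apply df_Lipschitz; assumption.
Qed.

(* p(K) is pinned down by q_v(p(K) d(K), K) = q*(K): q* and the other two arguments move
   Lipschitz-continuously in K, while q_v decreases in p at a uniform rate mu. *)
Lemma pf_Lipschitz_left : exists Lp, 0 <= Lp /\ forall a b,
  knot 0 <= a < knot L -> knot 0 <= b <= knot L -> Rabs (pf a - pf b) <= Lp * Rabs (a - b).
Proof.
  destruct qvR_p_modulus as [mu [Hmu Hmod]].
  destruct qvR_df_Lipschitz as [Lq [HLq HqLip]].
  exists ((2 + Lq) / mu). split; [apply Rlt_le, Rdiv_lt_0_compat; lra|].
  intros a b Ha Hb.
  pose proof (pf_bounds a ltac:(lra)). pose proof (pf_bounds b Hb).
  set (P := pf a) in *. set (Q := pf b) in *.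
  assert (Hlow : mu * Rabs (P - Q) <= Rabs (qvR Cv P (df a) a - qvR Cv Q (df a) a)).
  { destruct (Rle_dec P Q).
    - pose proof (Hmod a Ha P Q ltac:(lra) r ltac:(lra)).
      rewrite (Rabs_left1 (P - Q)), Rabs_right by nra. lra.
    - pose proof (Hmod a Ha Q P ltac:(lra) ltac:(lra) ltac:(lra)).
      rewrite (Rabs_right (P - Q)), Rabs_left1 by nra. lra. }
  assert (Ha0 : 0 <= a) by (pose proof (pos_INR (Kp 0)); unfold knot in Ha; lra).
  assert (Hb0 : 0 <= b) by (pose proof (pos_INR (Kp 0)); unfold knot in Hb; lra).
  pose proof (qstar_Lipschitz a b ltac:(lra) Hb).
  pose proof (qvR_Lipschitz_K Cv Q (df b) b a ltac:(lra)
                (fun j => Cv_unit _ j (df_simplex b Hb)) Hb0 Ha0).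
  pose proof (HqLip Q a b ltac:(lra) ltac:(lra) Hb).
  rewrite (Rabs_minus_sym b a) in *.
  assert (Hup : Rabs (qvR Cv P (df a) a - qvR Cv Q (df a) a) <= (2 + Lq) * Rabs (a - b)).
  { replace (qvR Cv P (df a) a - qvR Cv Q (df a) a) with
      ((qstar a - qstar b) + (qvR Cv Q (df b) b - qvR Cv Q (df b) a)
       + (qvR Cv Q (df b) a - qvR Cv Q (df a) a)) by (unfold qstar; fold P Q; ring).
    pose proof (Rabs_triang (qstar a - qstar b) (qvR Cv Q (df b) b - qvR Cv Q (df b) a)).
    pose proof (Rabs_triang ((qstar a - qstar b) + (qvR Cv Q (df b) b - qvR Cv Q (df b) a))
                  (qvR Cv Q (df b) a - qvR Cv Q (df a) a)).
    lra. }
  apply (Rmult_le_reg_l mu); [exact Hmu|].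
  replace (mu * ((2 + Lq) / mu * Rabs (a - b))) with ((2 + Lq) * Rabs (a - b))
    by (field; lra).
  lra.
Qed.

Lemma pf_Lipschitz : exists Lp, 0 <= Lp /\ forall a b,
  knot 0 <= a <= knot L -> knot 0 <= b <= knot L -> Rabs (pf a - pf b) <= Lp * Rabs (a - b).
Proof.
  destruct pf_Lipschitz_left as [Lp [HLp Hleft]]. exists Lp. split; [exact HLp|].
  intros a b Ha Hb.
  destruct (Rlt_dec a (knot L)); [apply Hleft; lra|].
  destruct (Rlt_dec b (knot L)).
  - rewrite Rabs_minus_sym, (Rabs_minus_sym a b). apply Hleft; lra.
  - replace b with a by lra. rewrite !Rminus_diag, Rabs_R0. lra.
Qed.

Lemma pv_Lipschitz : exists Kg, 0 < Kg /\ forall a b,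
  knot 0 <= a <= knot L -> knot 0 <= b <= knot L ->
  distM M (vscale (pf a) (df a)) (vscale (pf b) (df b)) <= Kg * Rabs (a - b).
Proof.
  destruct pf_Lipschitz as [Lp [HLp Hpl]].
  assert (HsM : 0 < sqrt (INR M)) by (apply sqrt_lt_R0, lt_0_INR; lia).
  exists (sqrt (INR M) * (Lp + 1)). split; [apply Rmult_lt_0_compat; lra|].
  intros a b Ha Hb. rewrite Rmult_assoc.
  apply distM_bound; [apply Rmult_le_pos; [lra | apply Rabs_pos]|].
  intros m Hm. unfold vscale.
  replace (pf a * df a m - pf b * df b m)
    with ((pf a - pf b) * df a m + pf b * (df a m - df b m)) by ring.
  eapply Rle_trans; [apply Rabs_triang|]. rewrite !Rabs_mult.
  destruct (df_simplex a Ha) as [Hda _]. specialize (Hda m Hm).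
  pose proof (pf_bounds b Hb).
  assert (Rabs (df a m) <= 1) by (apply Rabs_le; lra).
  assert (Rabs (pf b) <= 1) by (apply Rabs_le; lra).
  pose proof (Hpl a b Ha Hb). pose proof (df_coord_Lipschitz m a b Hm Ha Hb).
  pose proof (Rabs_pos (pf a - pf b)). pose proof (Rabs_pos (df a m - df b m)).
  pose proof (Rabs_pos (df a m)). pose proof (Rabs_pos (pf b)).
  nra.
Qed.

End Completed.

End Interpolation.
Theorem theorem7
  (M : nat) (Cv : nat -> (nat -> R) -> R)
  (L : nat) (Kp : nat -> nat) (p0 : nat -> R) (d0 : nat -> (nat -> R))
  (eps_q eps_v p_lo p_hi : R) :
  (1 <= M)%nat ->
  (* regularity of the C_{vj} on the simplex *)
  (forall j d, in_simplex M d -> 0 <= Cv j d <= 1) ->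
  (forall j, exists Lc, forall d1 d2, in_simplex M d1 -> in_simplex M d2 ->
       Rabs (Cv j d1 - Cv j d2) <= Lc * distM M d1 d2) ->
  (forall j d, in_simplex M d -> Cv j d >= Cv (S j) d) ->
  (* pinpoints *)
  (1 <= L)%nat ->
  (forall i, (i < L)%nat -> (Kp i < Kp (S i))%nat) ->
  (forall i, (i <= L)%nat -> 0 < p0 i < 1) ->
  (forall i, (i <= L)%nat -> in_simplex M (d0 i)) ->
  let qs := fun i => qvR Cv (p0 i) (d0 i) (INR (Kp i)) in
  let dil := fun i lam => vcomb lam (d0 (i - 1)%nat) (d0 i) in
  let qil := fun i lam => (1 - lam) * qs (i - 1)%nat + lam * qs i in
  (* Pinpoints Condition *)
  0 < eps_q ->
  (forall i, (1 <= i <= L)%nat -> qs (i - 1)%nat - qs i >= eps_q) ->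
  0 < eps_v ->
  (forall i lam, (1 <= i <= L)%nat -> 0 <= lam < 1 ->
       gtJ Cv eps_v (dil i lam) (Kil Kp i lam)) ->
  0 < p_lo -> p_lo < p_hi -> p_hi < 1 ->
  (forall i, (1 <= i <= L)%nat -> p_lo <= p0 i <= p_hi) ->
  (forall i lam, (1 <= i <= L)%nat -> 0 <= lam < 1 ->
       qvR Cv p_hi (dil i lam) (Kil Kp i lam) <= qil i lam /\
       qil i lam <= qvR Cv p_lo (dil i lam) (Kil Kp i lam)) ->
  (* the Interpolation Approach: specification of the completed functions *)
  let spec := fun (pf : R -> R) (df : R -> (nat -> R)) =>
    (forall i lam, (1 <= i <= L)%nat -> 0 <= lam < 1 ->
       p_lo <= pf (Kil Kp i lam) <= p_hi /\
       qvR Cv (pf (Kil Kp i lam)) (dil i lam) (Kil Kp i lam) = qil i lam /\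
       df (Kil Kp i lam) = dil i lam) /\
    pf (INR (Kp L)) = p0 L /\ df (INR (Kp L)) = d0 L in
  let K0 := INR (Kp 0%nat) in
  let KL := INR (Kp L) in
  (exists pf df, spec pf df) /\
  (forall pf df, spec pf df ->
     let pv := fun K => vscale (pf K) (df K) in
     let qstar := fun K => qvR Cv (pf K) (df K) K in
     (* (a) *)
     (exists Kg, 0 < Kg /\ forall Ka Kb, K0 <= Ka <= KL -> K0 <= Kb <= KL ->
        distM M (pv Ka) (pv Kb) <= Kg * Rabs (Ka - Kb)) /\
     (* (b) *)
     (forall K, K0 <= K <= KL ->
        limit1_in qstar (fun y => K0 <= y <= KL) (qstar K) K) /\
     (forall Ka Kb, K0 <= Ka <= KL -> K0 <= Kb <= KL -> Ka < Kb ->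
        qstar Kb < qstar Ka) /\
     (exists eps', 0 < eps' /\ forall Ka Kb, K0 <= Ka <= KL -> K0 <= Kb <= KL ->
        Rabs (qstar Ka - qstar Kb) >= eps' * Rabs (Ka - Kb)) /\
     (* (c) *)
     (forall K, K0 <= K < KL -> gtJ Cv eps_v (df K) K) /\
     (* (d) *)
     (forall K, K0 <= K <= KL -> p_lo <= pf K <= p_hi)).
Proof.
  intros.
  split; [eapply interp_spec_exists; eassumption|].
  intros pf df Hspec pv qstar.
  split; [eapply pv_Lipschitz; eassumption|].
  split; [intros K HK; eapply qstar_continuous; eassumption|].
  split; [intros Ka Kb Ha Hb Hab; eapply qstar_decreasing; eassumption|].
  split; [eapply qstar_expansive; eassumption|].
  split; [intros K HK; eapply df_gtJ; eassumption|].
  intros K HK; eapply pf_bounds; eassumption.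
Qed.
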